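(* Consider a run of Algorithm 1 (described in the context). Let $I_j$ be a correcting interval. Then at the time $I_j$ is bisected, $f(I_j)\subset Y_j$.
   Context: Problem. Fix $L>0$ and $T\ge 2$. An adversary fixes an unknown $L$-Lipschitz $f:[0,1]\to[0,L]$. In each round $t=1,\dots,T$: the adversary chooses $x_t\in[0,1]$; the learner observes $x_t$ and guesses $q_t$; the adversary observes $q_t$ and sends $\sigma_t\in\{0,1\}$, equal to $\sigma(q_t-f(x_t))$ in uncorrupted rounds and $1-\sigma(q_t-f(x_t))$ in corrupted rounds, where $\sigma(u)=1$ if $u>0$ and $0$ if $u\le 0$; the adversary chooses adaptively which rounds to corrupt, at most $C$ in total ($C$ unknown to the learner). $\mathtt{len}(I)$ is the length of an interval $I$. $\mathtt{MidpointQuery}(I,Y)$, $Y=[a,b]$: guess $q=(a+b)/2$; if $\sigma_t=1$ return $Y\cap[0,q+L\,\mathtt{len}(I)]$, if $\sigma_t=0$ return $Y\cap[q-L\,\mathtt{len}(I),L]$. Algorithm 1. Maintain a partition of $[0,1]$ into intervals; each $I_j$ carries a checking interval $S_j$, range $Y_j$, and a ''dubious'' flag (initially unset). Initially: $8$ intervals of length $1/8$ (the root intervals), each with $S_j=Y_j=[0,L]$. In round $t$, with $I_j$ the partition interval containing $x_t$: (i) if some endpoint of $S_j$ has not been guessed in a round whose context lay in $I_j$, guess such an endpoint; if the guess was $\min(S_j)$ with $\sigma_t=1$ or $\max(S_j)$ with $\sigma_t=0$, mark $I_j$ dubious; once both endpoints have been queried, set $Y_j=[0,L]$ if dubious and otherwise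 $Y_j=[\min(S_j)-L\,\mathtt{len}(I_j),\max(S_j)+L\,\mathtt{len}(I_j)]\cap[0,L]$. (ii) Otherwise set $Y_j:=\mathtt{MidpointQuery}(I_j,Y_j)$; if then $\mathtt{len}(Y_j)<\max(4L\,\mathtt{len}(I_j),4L/T)$, bisect $I_j$ into its two halves (its children, of which $I_j$ is the parent), which replace it, each with checking interval equal to the current $Y_j$ (endpoints unqueried, not dubious). Interval types. Say a round $t$ lies in $I_j$ if $I_j$ is the partition interval containing $x_t$ at round $t$. An interval $I_j$ is corrupted if some round lying in $I_j$ has a corrupted signal; it is correcting if its parent is corrupted and every round lying in $I_j$ is uncorrupted; it is safe if it is a root interval or its parent is safe or correcting, and every round lying in $I_j$ is uncorrupted. *)

From Stdlib Require Import Reals Lra List Bool Arith.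
Open Scope R_scope.

Definition Rleb (a b : R) : bool := if Rle_dec a b then true else false.
Definition Rltb (a b : R) : bool := if Rlt_dec a b then true else false.
Definition Reqb (a b : R) : bool := if Req_EM_T a b then true else false.

Definition sig (u : R) : bool := Rltb 0 u.

(* A partition interval: the dyadic interval I = [k/2^d, (k+1)/2^d] of
   depth d, with its checking interval S = [Slo,Shi], range Y = [Ylo,Yhi],
   flags recording whether min S / max S have been guessed in a round whose
   context lay in I, and the dubious flag. *)
Record node := mkNode {
  nd : nat; nk : nat;
  Slo : R; Shi : R;
  Ylo : R; Yhi : R;
  qmin : bool; qmax : bool; dub : bool }.

Definition ilo (n : node) : R := INR (nk n) / 2 ^ (nd n).
Definition ihi (n : node) : R := INR (S (nk n)) / 2 ^ (nd n).
Definition ilen (n : node) : R := / 2 ^ (nd n).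

(* Partition membership: intervals are half-open [lo,hi), except that the
   last one also contains 1. *)
Definition in_nodeb (n : node) (x : R) : bool :=
  Rleb (ilo n) x && (Rltb x (ihi n) || (Reqb x 1 && Nat.eqb (S (nk n)) (Nat.pow 2 (nd n)))).

Definition init (L : R) : list node :=
  map (fun k => mkNode 3 k 0 L 0 L false false false) (seq 0 8).

(* Processing of the interval containing the context in one round.
   corr = true iff the signal of this round is corrupted (flipped). *)
Definition process (L : R) (T : nat) (f : R -> R) (x : R) (corr : bool)
    (n : node) : list node * (node * bool) :=
  let s q := xorb (sig (q - f x)) corr in
  let len := ilen n in
  let setY (dubf : bool) (a b : R) : R * R :=
    if dubf then (0, L) else (Rmax 0 (a - L * len), Rmin L (b + L * len)) in
  if negb (qmin n) then
    let sg := s (Slo n) in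
    let dub' := dub n || sg in
    let Y' := if qmax n then setY dub' (Slo n) (Shi n) else (Ylo n, Yhi n) in
    let n' := mkNode (nd n) (nk n) (Slo n) (Shi n) (fst Y') (snd Y') true (qmax n) dub' in
    (n' :: nil, (n', false))
  else if negb (qmax n) then
    let sg := s (Shi n) in
    let dub' := dub n || negb sg in
    let Y' := setY dub' (Slo n) (Shi n) in
    let n' := mkNode (nd n) (nk n) (Slo n) (Shi n) (fst Y') (snd Y') true true dub' in
    (n' :: nil, (n', false))
  else
    let a := Ylo n in let b := Yhi n in
    let q := (a + b) / 2 in
    let sg := s q in
    let Y' := if sg then (Rmax a 0, Rmin b (q + L * len))
              else (Rmax a (q - L * len), Rmin b L) in
    let n' := mkNode (nd n) (nk n) (Slo n) (Shi n) (fst Y') (snd Y')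
                     (qmin n) (qmax n) (dub n) in
    if Rltb (snd Y' - fst Y') (Rmax (4 * L * len) (4 * L / INR T)) then
      let c1 := mkNode (S (nd n)) (2 * nk n)%nat (fst Y') (snd Y') (fst Y') (snd Y')
                       false false false in
      let c2 := mkNode (S (nd n)) (S (2 * nk n)) (fst Y') (snd Y') (fst Y') (snd Y')
                       false false false in
      (c1 :: c2 :: nil, (n', true))
    else (n' :: nil, (n', false)).

Fixpoint step (L : R) (T : nat) (f : R -> R) (x : R) (corr : bool)
    (st : list node) : list node * option (node * bool) :=
  match st with
  | nil => (nil, None)
  | n :: st' =>
      if in_nodeb n x then
        let (ns, i) := process L T f x corr n in (ns ++ st', Some i)
      else let (st'', o) := step L T f x corr st' in (n :: st'', o)
  end.

(* state L T f xs cs m = partition after rounds 1..m;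
   round t has context xs t and corruption flag cs t. *)
Fixpoint state (L : R) (T : nat) (f : R -> R) (xs : nat -> R) (cs : nat -> bool)
    (m : nat) : list node :=
  match m with
  | O => init L
  | S m' => fst (step L T f (xs m) (cs m) (state L T f xs cs m'))
  end.

(* What happened in round t: the interval containing x_t (after its update
   in that round) and whether it was bisected in that round. *)
Definition event (L : R) (T : nat) (f : R -> R) (xs : nat -> R) (cs : nat -> bool)
    (t : nat) : option (node * bool) :=
  snd (step L T f (xs t) (cs t) (state L T f xs cs (pred t))).

Definition lies_in L T f xs cs (t d k : nat) : Prop :=
  (1 <= t <= T)%nat /\
  exists n b, event L T f xs cs t = Some (n, b) /\ nd n = d /\ nk n = k.

Definition corrupted_int L T f xs cs (d k : nat) : Prop :=
  exists t, lies_in L T f xs cs t d k /\ cs t = true.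

(* Roots have depth 3; the parent of (d,k) is (d-1, k/2). *)
Definition correcting_int L T f xs cs (d k : nat) : Prop :=
  (3 < d)%nat /\ corrupted_int L T f xs cs (pred d) (Nat.div k 2) /\
  forall t, lies_in L T f xs cs t d k -> cs t = false.

From Stdlib Require Import Reals Lra List Bool Lia.
Open Scope R_scope.

(* Call an interval sound when the checks it has passed are truthful: an
   endpoint of S queried without making the interval dubious bounds f on the
   interval up to L * len, and once both endpoints are queried Y contains f(I).
   Fresh intervals are unqueried, hence sound, and an uncorrupted round keeps
   its interval sound: a truthful answer at min S (resp. max S) bounds f(x_t),
   hence f on I by the Lipschitz condition, from below (resp. above); a
   dubious interval restarts from Y = [0, L]; and a truthful midpoint answer
   only discards values that f(I) avoids.  Bisection happens in a midpoint
   round, after both endpoints are queried, so an interval none of whose rounds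
   is corrupted has f(I) in Y when it is bisected. *)

Definition dyadic_wf (n : node) : Prop := (S (nk n) <= 2 ^ nd n)%nat.

Lemma pow2_pos (d : nat) : 0 < 2 ^ d.
Proof. apply pow_lt; lra. Qed.

Lemma dyadic_wf_bounds (n : node) :
  dyadic_wf n -> 0 <= ilo n /\ ihi n <= 1 /\ ihi n - ilo n = ilen n.
Proof.
  unfold dyadic_wf, ilo, ihi, ilen; intros Hwf.
  pose proof (pow2_pos (nd n)) as Hpow.
  assert (Hk : INR (S (nk n)) <= 2 ^ nd n).
  { replace 2 with (INR 2) by (simpl; lra). rewrite <- pow_INR. apply le_INR; exact Hwf. }
  pose proof (pos_INR (nk n)).
  rewrite S_INR in *.
  split; [|split].
  - apply Rmult_le_pos; [lra | left; apply Rinv_0_lt_compat; lra].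
  - apply (Rmult_le_reg_r (2 ^ nd n)); [lra|].
    unfold Rdiv. rewrite Rmult_assoc, Rinv_l; lra.
  - field. lra.
Qed.

Lemma in_nodeb_bounds (n : node) (x : R) :
  dyadic_wf n -> 0 <= x <= 1 -> in_nodeb n x = true -> ilo n <= x <= ihi n.
Proof.
  intros Hwf Hx Hin. unfold in_nodeb, Rleb, Rltb, Reqb in Hin.
  destruct (Rle_dec (ilo n) x); [|discriminate].
  destruct (Rlt_dec x (ihi n)); [lra|].
  destruct (Req_EM_T x 1) as [->|]; [|discriminate].
  apply Nat.eqb_eq in Hin.
  split; [lra|]. unfold ihi. rewrite Hin, pow_INR. simpl INR.
  replace (1 + 1) with 2 by lra. pose proof (pow2_pos (nd n)).
  unfold Rdiv; rewrite Rinv_r; lra.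
Qed.

Lemma sig_true_pos (u : R) : sig u = true -> 0 < u.
Proof. unfold sig, Rltb. destruct (Rlt_dec 0 u); easy. Qed.

Lemma sig_false_nonpos (u : R) : sig u = false -> u <= 0.
Proof. unfold sig, Rltb. destruct (Rlt_dec 0 u); [discriminate | lra]. Qed.

Section OneRound.

Variables (L : R) (T : nat) (f : R -> R).

Definition near_context (n : node) (x : R) : Prop :=
  forall y, ilo n <= y <= ihi n ->
    f x - L * ilen n <= f y <= f x + L * ilen n /\ 0 <= f y <= L.

Record sound (n : node) : Prop := Sound {
  sound_lower : qmin n = true -> dub n = false ->
    forall y, ilo n <= y <= ihi n -> Slo n - L * ilen n <= f y;
  sound_upper : qmax n = true -> dub n = false ->
    forall y, ilo n <= y <= ihi n -> f y <= Shi n + L * ilen n;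
  sound_range : qmin n = true -> qmax n = true ->
    forall y, ilo n <= y <= ihi n -> Ylo n <= f y <= Yhi n }.

Lemma unqueried_sound (n : node) : qmin n = false -> qmax n = false -> sound n.
Proof. intros Hq1 Hq2; split; congruence. Qed.

(* The range set by step (i) once both endpoints of S have been queried. *)
Lemma checked_range_valid (d : bool) (a b l v : R) :
  (d = false -> a - l <= v) -> (d = false -> v <= b + l) -> 0 <= v <= L ->
  fst (if d then (0, L) else (Rmax 0 (a - l), Rmin L (b + l))) <= v
  <= snd (if d then (0, L) else (Rmax 0 (a - l), Rmin L (b + l))).
Proof.
  intros Hlo Hhi Hv. destruct d; cbn; [lra|].
  split; [apply Rmax_lub | apply Rmin_glb]; intuition lra.
Qed.

Notation updated n x := (fst (snd (process L T f x false n))).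

Lemma sound_query_min (n : node) (x : R) :
  qmin n = false -> sound n -> near_context n x -> sound (updated n x).
Proof.
  intros Hq [_ Hup _] Hx. unfold process; rewrite Hq; cbn; rewrite xorb_false_r.
  destruct (sig (Slo n - f x)) eqn:Hs; rewrite ?orb_true_r, ?orb_false_r.
  - split; cbn; try discriminate.
    intros _ ->. cbn. intros y Hy. specialize (Hx y Hy). lra.
  - apply sig_false_nonpos in Hs.
    assert (Hlow : forall y, ilo n <= y <= ihi n -> Slo n - L * ilen n <= f y).
    { intros y Hy. specialize (Hx y Hy). lra. }
    split; cbn; auto.
    intros _ Hqmax y Hy. rewrite Hqmax.
    apply checked_range_valid; auto. apply Hx; auto.
Qed.

Lemma sound_query_max (n : node) (x : R) :
  qmin n = true -> qmax n = false -> sound n -> near_context n x -> sound (updated n x).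
Proof.
  intros Hq1 Hq2 [Hlow _ _] Hx. unfold process; rewrite Hq1, Hq2; cbn; rewrite xorb_false_r.
  destruct (sig (Shi n - f x)) eqn:Hs; cbn; rewrite ?orb_true_r, ?orb_false_r.
  - apply sig_true_pos in Hs.
    assert (Hup : forall y, ilo n <= y <= ihi n -> f y <= Shi n + L * ilen n).
    { intros y Hy. specialize (Hx y Hy). lra. }
    split; cbn; auto.
    intros _ _ y Hy. apply checked_range_valid; auto. apply Hx; auto.
  - split; cbn; try discriminate.
    intros _ _ y Hy. specialize (Hx y Hy). lra.
Qed.

Lemma sound_midpoint (n : node) (x : R) :
  qmin n = true -> qmax n = true -> sound n -> near_context n x -> sound (updated n x).
Proof.
  intros Hq1 Hq2 [Hlow Hup Hrange] Hx. unfold process; rewrite Hq1, Hq2; cbn; rewrite xorb_false_r.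
  destruct (sig ((Ylo n + Yhi n) / 2 - f x)) eqn:Hs;
    [apply sig_true_pos in Hs | apply sig_false_nonpos in Hs];
    destruct (Rltb _ _); split; cbn; auto;
    intros _ _ y Hy; specialize (Hx y Hy); specialize (Hrange Hq1 Hq2 y Hy);
    split; try apply Rmax_lub; try apply Rmin_glb; lra.
Qed.

Lemma process_sound (n : node) (x : R) :
  sound n -> near_context n x -> sound (updated n x).
Proof.
  destruct (qmin n) eqn:Hq1; [destruct (qmax n) eqn:Hq2|].
  - apply sound_midpoint; auto.
  - apply sound_query_max; auto.
  - apply sound_query_min; auto.
Qed.

Lemma lipschitz_near_context (n : node) (x : R) :
  0 < L ->
  (forall y z, 0 <= y <= 1 -> 0 <= z <= 1 -> Rabs (f y - f z) <= L * Rabs (y - z)) ->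
  (forall y, 0 <= y <= 1 -> 0 <= f y <= L) ->
  dyadic_wf n -> ilo n <= x <= ihi n -> near_context n x.
Proof.
  intros HL Lip Rg Hwf Hx y Hy.
  destruct (dyadic_wf_bounds n Hwf) as (H0 & H1 & Hlen).
  assert (Hd : Rabs (y - x) <= ilen n) by (apply Rabs_le; lra).
  assert (Hf : Rabs (f y - f x) <= L * ilen n).
  { eapply Rle_trans; [apply Lip; lra|]. apply Rmult_le_compat_l; lra. }
  pose proof (Rle_abs (f y - f x)). pose proof (Rle_abs (f x - f y)) as Hsym.
  rewrite Rabs_minus_sym in Hsym.
  split; [lra | apply Rg; lra].
Qed.

End OneRound.

Lemma process_index (L : R) (T : nat) (f : R -> R) (x : R) (c : bool) (n : node) :
  nd (fst (snd (process L T f x c n))) = nd n /\ nk (fst (snd (process L T f x c n))) = nk n.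
Proof.
  unfold process. destruct (qmin n), (qmax n); cbn; auto; destruct (Rltb _ _); cbn; auto.
Qed.

Lemma process_bisect_checked (L : R) (T : nat) (f : R -> R) (x : R) (c : bool) (n : node) :
  snd (snd (process L T f x c n)) = true ->
  qmin (fst (snd (process L T f x c n))) = true /\ qmax (fst (snd (process L T f x c n))) = true.
Proof.
  unfold process. destruct (qmin n), (qmax n); cbn; try discriminate; destruct (Rltb _ _); cbn; auto.
Qed.

Lemma process_replacements (L : R) (T : nat) (f : R -> R) (x : R) (c : bool) (n m : node) :
  In m (fst (process L T f x c n)) ->
  m = fst (snd (process L T f x c n)) \/
  (qmin m = false /\ qmax m = false /\ (dyadic_wf n -> dyadic_wf m)).
Proof.
  unfold process. destruct (qmin n), (qmax n); cbn; try (intros [<-|[]]; auto; fail);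
  destruct (Rltb _ _); cbn; try (intros [<-|[]]; auto; fail).
  unfold dyadic_wf; intros [<-|[<-|[]]]; right; cbn; repeat split; lia.
Qed.

Lemma step_event (L : R) (T : nat) (f : R -> R) (x : R) (c : bool) (st : list node) p :
  snd (step L T f x c st) = Some p ->
  exists n0, In n0 st /\ in_nodeb n0 x = true /\ p = snd (process L T f x c n0).
Proof.
  induction st as [|a st IH]; cbn; [discriminate|].
  destruct (in_nodeb a x) eqn:Ha.
  - destruct (process L T f x c a) as [ns i] eqn:Hp. cbn. intros [= <-].
    exists a. rewrite Hp. auto.
  - destruct (step L T f x c st) as [st' o]. cbn in *.
    intros Hp. destruct (IH Hp) as (n0 & ? & ? & ?). exists n0. auto.
Qed.

Lemma step_members (L : R) (T : nat) (f : R -> R) (x : R) (c : bool) (st : list node) m :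
  In m (fst (step L T f x c st)) ->
  In m st \/
  exists n0, In n0 st /\ in_nodeb n0 x = true /\ In m (fst (process L T f x c n0)) /\
    snd (step L T f x c st) = Some (snd (process L T f x c n0)).
Proof.
  induction st as [|a st IH]; cbn; [tauto|].
  destruct (in_nodeb a x) eqn:Ha.
  - destruct (process L T f x c a) as [ns i] eqn:Hp. cbn.
    intros Hm. apply in_app_or in Hm as [Hm|Hm]; [|auto].
    right. exists a. rewrite Hp. auto.
  - destruct (step L T f x c st) as [st' o]. cbn in *.
    intros [<-|Hm]; [auto|].
    destruct (IH Hm) as [?|(n0 & ? & ? & ? & ?)]; [auto|].
    right. exists n0. auto.
Qed.

Section Run.

Variables (L : R) (T : nat) (f : R -> R) (xs : nat -> R) (cs : nat -> bool).
Hypothesis L_pos : 0 < L.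
Hypothesis f_lipschitz :
  forall y z, 0 <= y <= 1 -> 0 <= z <= 1 -> Rabs (f y - f z) <= L * Rabs (y - z).
Hypothesis f_range : forall y, 0 <= y <= 1 -> 0 <= f y <= L.
Hypothesis xs_unit : forall t, (1 <= t <= T)%nat -> 0 <= xs t <= 1.

Definition uncorrupted_upto (m d k : nat) : Prop :=
  forall s, (s <= m)%nat -> lies_in L T f xs cs s d k -> cs s = false.

Lemma state_wf (m : nat) (n : node) : In n (state L T f xs cs m) -> dyadic_wf n.
Proof.
  revert n; induction m as [|m IH]; intros n Hn; cbn [state] in Hn.
  - unfold init in Hn. apply in_map_iff in Hn as (k & <- & Hk).
    apply in_seq in Hk. unfold dyadic_wf; cbn; lia.
  - apply step_members in Hn as [Hn|(n0 & Hn0 & _ & Hm & _)]; [auto|].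
    apply process_replacements in Hm as [->|(_ & _ & Hwf)]; [|auto].
    unfold dyadic_wf. destruct (process_index L T f (xs (S m)) (cs (S m)) n0) as [-> ->].
    apply IH; auto.
Qed.

Lemma event_sound (t : nat) (n : node) (b : bool) :
  (1 <= t <= T)%nat ->
  (forall n0, In n0 (state L T f xs cs (pred t)) ->
     uncorrupted_upto (pred t) (nd n0) (nk n0) -> sound L f n0) ->
  event L T f xs cs t = Some (n, b) -> uncorrupted_upto t (nd n) (nk n) -> sound L f n.
Proof.
  intros Ht Hprev Hev Hclean.
  assert (Hct : cs t = false).
  { apply Hclean; [lia|]. split; [lia|]. exists n, b. auto. }
  apply step_event in Hev as (n0 & Hn0 & Hin & Hp).
  assert (Hidx := process_index L T f (xs t) (cs t) n0).
  assert (Hn : n = fst (snd (process L T f (xs t) (cs t) n0))) by (rewrite <- Hp; auto).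
  rewrite <- Hn in Hidx. destruct Hidx as [Hd Hk].
  rewrite Hct in Hn. subst n.
  apply process_sound.
  - apply Hprev; [auto|]. intros s Hs. rewrite <- Hd, <- Hk. apply Hclean; lia.
  - apply lipschitz_near_context; auto; [eapply state_wf; eauto|].
    apply in_nodeb_bounds; eauto using state_wf.
Qed.

Lemma state_sound (m : nat) (n : node) :
  (m <= T)%nat -> In n (state L T f xs cs m) -> uncorrupted_upto m (nd n) (nk n) -> sound L f n.
Proof.
  revert n; induction m as [|m IH]; intros n Hm Hn Hclean; cbn [state] in Hn.
  - unfold init in Hn. apply in_map_iff in Hn as (k & <- & _).
    apply unqueried_sound; reflexivity.
  - apply step_members in Hn as [Hn|(n0 & Hn0 & _ & Hrep & Hev)].
    + apply IH; auto; [lia|]. intros s Hs. apply Hclean; lia.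
    + apply process_replacements in Hrep as [->|(Hq1 & Hq2 & _)].
      * eapply (event_sound (S m)); [lia | intros n1 Hn1 Hc1; apply IH; auto; lia | | exact Hclean].
        unfold event; cbn [pred]. rewrite Hev. f_equal. apply surjective_pairing.
      * apply unqueried_sound; auto.
Qed.

Lemma event_bisect_checked (t : nat) (n : node) :
  event L T f xs cs t = Some (n, true) -> qmin n = true /\ qmax n = true.
Proof.
  intros Hev. apply step_event in Hev as (n0 & _ & _ & Hp).
  pose proof (process_bisect_checked L T f (xs t) (cs t) n0) as Hb.
  rewrite <- Hp in Hb. auto.
Qed.

End Run.

Theorem lemma22 (L : R) (T C : nat) (f : R -> R) (xs : nat -> R) (cs : nat -> bool) :
  0 < L -> (2 <= T)%nat ->
  (forall y z, 0 <= y <= 1 -> 0 <= z <= 1 -> Rabs (f y - f z) <= L * Rabs (y - z)) ->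
  (forall y, 0 <= y <= 1 -> 0 <= f y <= L) ->
  (forall t, (1 <= t <= T)%nat -> 0 <= xs t <= 1) ->
  (length (filter cs (seq 1 T)) <= C)%nat ->
  forall (t : nat) (n : node),
    (1 <= t <= T)%nat ->
    event L T f xs cs t = Some (n, true) ->
    correcting_int L T f xs cs (nd n) (nk n) ->
    forall y, ilo n <= y <= ihi n -> Ylo n <= f y <= Yhi n.
Proof.
  intros HL _ Lip Rg Xs _ t n Ht Hev [_ [_ Hclean]].
  destruct (event_bisect_checked L T f xs cs t n Hev) as [Hq1 Hq2].
  apply (sound_range L f n); auto.
  apply (event_sound L T f xs cs HL Lip Rg Xs t n true Ht); auto.
  - intros n0 Hn0. apply state_sound; auto; lia.
  - intros s _. apply Hclean.
Qed.
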